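(* Let $x_1<x_2$, $u_0\in C^4([x_1,x_2])$ and $u_1\in C^3([x_1,x_2])$. Consider the system for $(R,S,W)(x,t)$: \[ \begin{cases} R_t+2t^2R_x=\dfrac{R-S}{2t}-2t^2\big(u_1'(x)+u_0''(x)t\big),\\[4pt] S_t-2t^2S_x=\dfrac{S-R}{2t}+2t^2\big(u_1'(x)-u_0''(x)t\big),\\[4pt] W_t-2t^2W_x=-2t\big(R+u_1(x)\big), \end{cases} \] with boundary conditions $(R,S,W)(x,0)=(0,0,0)$ and $(R_t,S_t,W_t)(x,0)=(0,0,0)$ for $x\in[x_1,x_2]$. Then there exists a constant $\tilde\delta$ with $0<\tilde\delta\le\sqrt[3]{\frac{3(x_2-x_1)}{4}}$ such that this boundary problem has a classical solution in the region \[ \widetilde D_{\tilde\delta}=\Big\{(x,t):\ 0\le t\le\tilde\delta,\ x_1+\tfrac23t^3\le x\le x_2-\tfrac23t^3\Big\}. \] *)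

From Stdlib Require Import Reals Lra.
Open Scope R_scope.

Definition Icc (a b x : R) : Prop := a <= x <= b.

Definition deriv_within (D : R -> Prop) (f : R -> R) (x l : R) : Prop :=
  forall eps, 0 < eps -> exists delta, 0 < delta /\
    forall y, D y -> Rabs (y - x) < delta ->
      Rabs (f y - f x - l * (y - x)) <= eps * Rabs (y - x).

Definition cont_within (D : R -> Prop) (f : R -> R) (x : R) : Prop :=
  forall eps, 0 < eps -> exists delta, 0 < delta /\
    forall y, D y -> Rabs (y - x) < delta -> Rabs (f y - f x) < eps.

Definition Ck_on (a b : R) (k : nat) (f : R -> R) (d : nat -> R -> R) : Prop :=
  (forall x, Icc a b x -> d O x = f x) /\
  (forall i x, (i < k)%nat -> Icc a b x -> deriv_within (Icc a b) (d i) x (d (S i) x)) /\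
  (forall i x, (i <= k)%nat -> Icc a b x -> cont_within (Icc a b) (d i) x).

Definition diff2_within (D : R -> R -> Prop) (F : R -> R -> R) (x t a b : R) : Prop :=
  forall eps, 0 < eps -> exists delta, 0 < delta /\
    forall y s, D y s -> Rabs (y - x) < delta -> Rabs (s - t) < delta ->
      Rabs (F y s - F x t - a * (y - x) - b * (s - t))
        <= eps * (Rabs (y - x) + Rabs (s - t)).

Definition cont2_within (D : R -> R -> Prop) (F : R -> R -> R) (x t : R) : Prop :=
  forall eps, 0 < eps -> exists delta, 0 < delta /\
    forall y s, D y s -> Rabs (y - x) < delta -> Rabs (s - t) < delta ->
      Rabs (F y s - F x t) < eps.

Definition C1_on2 (D : R -> R -> Prop) (F Fx Ft : R -> R -> R) : Prop :=
  forall x t, D x t ->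
    diff2_within D F x t (Fx x t) (Ft x t) /\
    cont2_within D F x t /\ cont2_within D Fx x t /\ cont2_within D Ft x t.

Definition Dtilde (x1 x2 delta : R) (x t : R) : Prop :=
  0 <= t <= delta /\ x1 + 2/3 * t ^ 3 <= x <= x2 - 2/3 * t ^ 3.

From Stdlib Require Import Reals Lra Lia.
From Coquelicot Require Import Coquelicot.
Open Scope R_scope.

(* With R = u_t/t - 2t u_x - u1 - t u0', S = u_t/t + 2t u_x - u1 + t u0' and W = -2u - u0 the
   system reduces to the single Euler-Poisson-Darboux type equation u_tt - u_t/t = 4t^4 u_xx
   with u(x,0) = -u0/2 and u_t/t -> u1 as t -> 0.  It is solved explicitly by weighted means
   of the data over the characteristic interval [x - 2/3 t^3, x + 2/3 t^3] with weights
   (1 - m^2)^(1/6) and (1 - m^2)^(5/6).  Integrating by parts in these weights gives the two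
   first-order identities u_t = t (u_t/t) and (u_t/t)_t = 4t^3 u_xx, which are exactly what
   the three equations require.  Extending u0 and u1 beyond [x1, x2] by Taylor polynomials
   makes the solution C^1 in the whole plane, so any admissible delta works. *)

Lemma is_derive_epsilon (f : R -> R) (x l : R) :
  is_derive f x l <->
  forall eps, 0 < eps -> exists d, 0 < d /\
    forall y, Rabs (y - x) < d -> Rabs (f y - f x - l * (y - x)) <= eps * Rabs (y - x).
Proof.
  rewrite is_derive_Reals. split.
  - intros H eps Heps. destruct (H eps Heps) as [d Hd].
    exists d. split; [apply cond_pos|]. intros y Hy.
    destruct (Req_dec y x) as [->|Hyx].
    + replace (f x - f x - l * (x - x)) with 0 by ring.
      rewrite Rminus_diag, Rabs_R0. lra.
    + assert (Hh : y - x <> 0) by lra.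
      specialize (Hd (y - x) Hh Hy). replace (x + (y - x)) with y in Hd by ring.
      replace (f y - f x - l * (y - x)) with (((f y - f x) / (y - x) - l) * (y - x))
        by (field; exact Hh).
      rewrite Rabs_mult. apply Rmult_le_compat_r; [apply Rabs_pos | lra].
  - intros H eps Heps. destruct (H (eps / 2)) as [d [Hd Hy]]; [lra|].
    exists (mkposreal d Hd). intros h Hh Hhd. simpl in Hhd.
    specialize (Hy (x + h)). replace (x + h - x) with h in Hy by ring.
    specialize (Hy Hhd).
    replace ((f (x + h) - f x) / h - l) with ((f (x + h) - f x - l * h) / h)
      by (field; exact Hh).
    rewrite Rabs_div by exact Hh.
    apply Rle_lt_trans with (eps / 2); [|lra].
    apply Rmult_le_reg_r with (Rabs h); [now apply Rabs_pos_lt|].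
    unfold Rdiv. rewrite Rmult_assoc, Rinv_l by now apply Rabs_no_R0. lra.
Qed.

Lemma continuous_epsilon (f : R -> R) (x : R) :
  continuous f x <->
  forall eps, 0 < eps -> exists d, 0 < d /\
    forall y, Rabs (y - x) < d -> Rabs (f y - f x) < eps.
Proof.
  split.
  - intros H%continuity_pt_filterlim eps Heps. destruct (H eps Heps) as [d [Hd Hy]].
    exists d. split; [exact Hd|]. intros y Hyx.
    destruct (Req_dec y x) as [->|Hne].
    + rewrite !Rminus_diag, Rabs_R0. exact Heps.
    + apply Hy. split; [split; [exact I | auto] | exact Hyx].
  - intros H. apply continuity_pt_filterlim. intros eps Heps.
    destruct (H eps Heps) as [d [Hd Hy]].
    exists d. split; [exact Hd|]. intros y [_ Hyx]. now apply Hy.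
Qed.

Lemma is_derive_eq (f : R -> R) (x l l' : R) : is_derive f x l -> l = l' -> is_derive f x l'.
Proof. now intros H <-. Qed.

Lemma is_derive_continuous (f : R -> R) (x l : R) : is_derive f x l -> continuous f x.
Proof.
  intros H. apply (ex_derive_continuous (K := R_AbsRing) (V := R_NormedModule)).
  now exists l.
Qed.

Lemma continuous_pow (n : nat) (x : R) : continuous (fun z => z ^ n) x.
Proof. exact (is_derive_continuous _ _ _ (is_derive_pow (fun z => z) n x 1 (is_derive_id x))). Qed.

Lemma continuity_2d_pt_fst (f : R -> R) (x t : R) :
  continuous f x -> continuity_2d_pt (fun u _ => f u) x t.
Proof.
  intros Hf. apply (continuity_1d_2d_pt_comp f (fun u _ => u));
    [now apply continuity_pt_filterlim | apply continuity_2d_pt_id1].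
Qed.

Lemma continuity_2d_pt_snd (f : R -> R) (x t : R) :
  continuous f t -> continuity_2d_pt (fun _ v => f v) x t.
Proof.
  intros Hf. apply (continuity_1d_2d_pt_comp f (fun _ v => v));
    [now apply continuity_pt_filterlim | apply continuity_2d_pt_id2].
Qed.

Ltac derive_step :=
  match goal with
  | |- is_derive (fun _ => ?c) _ _ => apply (is_derive_const (K := R_AbsRing) c)
  | |- is_derive (fun z => z) _ _ => apply (is_derive_id (K := R_AbsRing))
  | |- is_derive (fun z => z ^ _) _ _ => apply (is_derive_pow (fun z => z))
  | |- is_derive (fun z => @?f z + @?g z) _ _ => apply (is_derive_plus (K := R_AbsRing) f g)
  | |- is_derive (fun z => @?f z - @?g z) _ _ => apply (is_derive_minus (K := R_AbsRing) f g)
  | |- is_derive (fun z => @?f z * @?g z) _ _ =>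
      apply (is_derive_mult (K := R_AbsRing) f g); [ | | intros; apply Rmult_comm]
  end.

(* Coquelicot states derivatives with the generic plus, mult and scal; turn them back into
   arithmetic on R so that ring and field apply. *)
Ltac simpl_derive_value :=
  unfold minus, plus, opp, scal; simpl; unfold mult, one, zero; simpl; rewrite ?S_INR, ?INR_0;
  match goal with |- @eq _ ?l ?r => change (@eq R l r) end.

Ltac continuity_step :=
  match goal with
  | |- continuous (fun _ => ?c) _ => apply (continuous_const (U := R_UniformSpace) c)
  | |- continuous (fun z => z) _ => apply (continuous_id (U := R_UniformSpace))
  | |- continuous (fun z => @?f z + @?g z) _ => apply (continuous_plus (K := R_AbsRing) f g)
  | |- continuous (fun z => @?f z - @?g z) _ =>
      apply (continuous_minus (K := R_AbsRing) f g)
  | |- continuous (fun z => @?f z * @?g z) _ => apply (continuous_mult (K := R_AbsRing) f g)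
  end.

Ltac continuity_2d_step :=
  match goal with
  | |- continuity_2d_pt (fun _ _ => _) _ _ => apply continuity_2d_pt_const
  | |- continuity_2d_pt (fun u _ => u) _ _ => apply continuity_2d_pt_id1
  | |- continuity_2d_pt (fun _ v => v) _ _ => apply continuity_2d_pt_id2
  | |- continuity_2d_pt (fun u _ => u ^ ?n) _ _ =>
      apply (continuity_2d_pt_fst (fun u => u ^ n)), continuous_pow
  | |- continuity_2d_pt (fun _ v => v ^ ?n) _ _ =>
      apply (continuity_2d_pt_snd (fun v => v ^ n)), continuous_pow
  | |- continuity_2d_pt (fun u v => @?f u v + @?g u v) _ _ => apply (continuity_2d_pt_plus f g)
  | |- continuity_2d_pt (fun u v => @?f u v - @?g u v) _ _ => apply (continuity_2d_pt_minus f g)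
  | |- continuity_2d_pt (fun u v => @?f u v * @?g u v) _ _ => apply (continuity_2d_pt_mult f g)
  end.

(* The x-increment is handled by the mean value theorem, which is where continuity of
   the x-partial is needed; the t-increment only uses differentiability at (x,t). *)
Lemma differentiable_pt_lim_of_partials (f fx ft : R -> R -> R) (x t : R) :
  (forall u v, is_derive (fun z => f z v) u (fx u v)) ->
  is_derive (fun z => f x z) t (ft x t) ->
  continuity_2d_pt fx x t ->
  differentiable_pt_lim f x t (fx x t) (ft x t).
Proof.
  intros Hx Ht Hc eps.
  destruct (Hc (pos_div_2 eps)) as [d1 Hd1].
  destruct (proj1 (is_derive_epsilon _ _ _) Ht (eps / 2)) as [d2 [Hd2 H2]].
  { destruct eps; simpl; lra. }
  assert (Hm : 0 < Rmin d1 d2) by (apply Rmin_pos; [apply cond_pos | lra]).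
  exists (mkposreal _ Hm). intros u v Hu Hv. simpl in Hu, Hv.
  destruct (MVT_gen (fun z => f z v) x u (fun z => fx z v)) as [c [Hc1 Hc2]].
  { intros; apply Hx. }
  { intros c _. apply continuity_pt_filterlim. exact (is_derive_continuous _ _ _ (Hx c v)). }
  assert (Hcx : Rabs (c - x) <= Rabs (u - x)).
  { unfold Rmin, Rmax in Hc1. destruct (Rle_dec x u); unfold Rabs;
    destruct (Rcase_abs (c - x)); destruct (Rcase_abs (u - x)); lra. }
  assert (Hf1 : Rabs (fx c v - fx x t) < eps / 2).
  { apply Hd1.
    - eapply Rle_lt_trans; [exact Hcx|]. eapply Rlt_le_trans; [exact Hu | apply Rmin_l].
    - eapply Rlt_le_trans; [exact Hv | apply Rmin_l]. }
  assert (Hf2 := H2 v (Rlt_le_trans _ _ _ Hv (Rmin_r _ _))).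
  replace (f u v - f x t - (fx x t * (u - x) + ft x t * (v - t)))
    with ((fx c v - fx x t) * (u - x) + (f x v - f x t - ft x t * (v - t))) by lra.
  eapply Rle_trans; [apply Rabs_triang|]. rewrite Rabs_mult.
  pose proof (Rmax_l (Rabs (u - x)) (Rabs (v - t))).
  pose proof (Rmax_r (Rabs (u - x)) (Rabs (v - t))).
  pose proof (Rabs_pos (u - x)) as Hux.
  assert (Rabs (fx c v - fx x t) * Rabs (u - x) <= eps / 2 * Rabs (u - x))
    by (apply Rmult_le_compat_r; lra).
  destruct eps as [e He]; simpl in *. nra.
Qed.

Lemma diff2_within_of_differentiable (D : R -> R -> Prop) (F : R -> R -> R) (x t a b : R) :
  differentiable_pt_lim F x t a b -> diff2_within D F x t a b.
Proof.
  intros H eps He. destruct (H (mkposreal eps He)) as [d Hd].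
  exists d. split; [apply cond_pos|]. intros y s _ Hy Hs.
  specialize (Hd y s Hy Hs). simpl in Hd.
  replace (F y s - F x t - a * (y - x) - b * (s - t))
    with (F y s - F x t - (a * (y - x) + b * (s - t))) by ring.
  eapply Rle_trans; [exact Hd|]. apply Rmult_le_compat_l; [lra|].
  unfold Rmax; destruct (Rle_dec _ _); generalize (Rabs_pos (y - x)) (Rabs_pos (s - t)); lra.
Qed.

Lemma cont2_within_of_continuity_2d (D : R -> R -> Prop) (F : R -> R -> R) (x t : R) :
  continuity_2d_pt F x t -> cont2_within D F x t.
Proof.
  intros H eps He. destruct (H (mkposreal eps He)) as [d Hd].
  exists d. split; [apply cond_pos|]. intros y s _ Hy Hs. now apply Hd.
Qed.

Lemma C1_on2_of_partials (D : R -> R -> Prop) (F Fx Ft : R -> R -> R) :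
  (forall u v, is_derive (fun z => F z v) u (Fx u v)) ->
  (forall u v, is_derive (fun z => F u z) v (Ft u v)) ->
  (forall u v, continuity_2d_pt Fx u v) ->
  (forall u v, continuity_2d_pt Ft u v) ->
  C1_on2 D F Fx Ft.
Proof.
  intros HFx HFt HcFx HcFt x t _.
  assert (Hd := differentiable_pt_lim_of_partials F Fx Ft x t HFx (HFt x t) (HcFx x t)).
  split; [now apply diff2_within_of_differentiable|].
  split; [|split; now apply cont2_within_of_continuity_2d].
  apply cont2_within_of_continuity_2d, differentiable_continuity_pt.
  now exists (Fx x t), (Ft x t).
Qed.

Lemma is_derive_RInt_param_continuous (F G : R -> R -> R) (a b p : R) :
  (forall q m, is_derive (fun z => F z m) q (G q m)) ->
  (forall q m, continuity_2d_pt G q m) ->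
  (forall q, ex_RInt (F q) a b) ->
  is_derive (fun q => RInt (F q) a b) p (RInt (G p) a b).
Proof.
  intros HF HG Hex. eapply is_derive_eq.
  - apply (is_derive_RInt_param F a b p).
    + apply filter_forall. intros q m _. eexists. apply HF.
    + intros m _. apply (continuity_2d_pt_ext G); [|apply HG].
      intros q m'. symmetry. apply is_derive_unique, HF.
    + apply filter_forall. exact Hex.
  - apply RInt_ext. intros m _. apply is_derive_unique, HF.
Qed.

Lemma locally_lt (x a : R) : x < a -> locally x (fun y => y < a).
Proof.
  intros H. assert (H' : 0 < a - x) by lra. exists (mkposreal _ H'). intros y Hy.
  unfold ball in Hy; simpl in Hy; unfold AbsRing_ball, abs, minus, plus, opp in Hy; simpl in Hy.
  apply Rabs_def2 in Hy. lra.
Qed.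

Lemma locally_gt (x a : R) : a < x -> locally x (fun y => a < y).
Proof.
  intros H. assert (H' : 0 < x - a) by lra. exists (mkposreal _ H'). intros y Hy.
  unfold ball in Hy; simpl in Hy; unfold AbsRing_ball, abs, minus, plus, opp in Hy; simpl in Hy.
  apply Rabs_def2 in Hy. lra.
Qed.

Definition ppow (g z : R) : R := if Rlt_dec 0 z then Rpower z g else 0.

Lemma ppow_pos (g z : R) : 0 < z -> ppow g z = Rpower z g.
Proof. intros H; unfold ppow; destruct (Rlt_dec 0 z); [reflexivity | lra]. Qed.

Lemma ppow_nonpos (g z : R) : z <= 0 -> ppow g z = 0.
Proof. intros H; unfold ppow; destruct (Rlt_dec 0 z); [lra | reflexivity]. Qed.

Lemma ppow_near_0 (g : R) : 0 < g ->
  forall eps, 0 < eps -> exists d, 0 < d /\ forall z, Rabs z < d -> Rabs (ppow g z) < eps.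
Proof.
  intros Hg eps He. exists (Rpower eps (/ g)). split; [apply exp_pos|].
  intros z Hz. destruct (Rlt_dec 0 z) as [Hp|Hn].
  - rewrite ppow_pos, Rabs_pos_eq by (auto; left; apply exp_pos).
    rewrite Rabs_pos_eq in Hz by lra.
    replace eps with (Rpower (Rpower eps (/ g)) g)
      by (rewrite Rpower_mult, Rinv_l by lra; now apply Rpower_1).
    now apply Rlt_Rpower_l.
  - rewrite ppow_nonpos, Rabs_R0 by lra. exact He.
Qed.

Lemma ppow_continuous (g z : R) : 0 < g -> continuous (ppow g) z.
Proof.
  intros Hg. destruct (Rtotal_order z 0) as [Hn|[->|Hp]].
  - apply continuous_ext_loc with (fun _ => 0); [|apply continuous_const].
    apply filter_imp with (fun y => y < 0); [|now apply locally_lt].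
    intros y Hy. rewrite ppow_nonpos; lra.
  - apply continuous_epsilon. intros eps He.
    destruct (ppow_near_0 g Hg eps He) as [d [Hd Hy]].
    exists d; split; [exact Hd|]. intros y Hy'.
    rewrite (ppow_nonpos g 0), Rminus_0_r by lra. rewrite Rminus_0_r in Hy'. now apply Hy.
  - apply continuous_ext_loc with (fun y => Rpower y g).
    + apply filter_imp with (fun y => 0 < y); [|now apply locally_gt].
      intros y Hy. now rewrite ppow_pos.
    + apply continuity_pt_filterlim, derivable_continuous_pt.
      exists (g * Rpower z (g - 1)). now apply derivable_pt_lim_power.
Qed.

Lemma is_derive_mul_ppow (g z : R) : 0 < g ->
  is_derive (fun y => y * ppow g y) z ((1 + g) * ppow g z).
Proof.
  intros Hg. destruct (Rtotal_order z 0) as [Hn|[->|Hp]].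
  - apply is_derive_ext_loc with (fun _ => 0).
    + apply filter_imp with (fun y => y < 0); [|now apply locally_lt].
      intros y Hy. rewrite ppow_nonpos; lra.
    + rewrite ppow_nonpos, Rmult_0_r by lra. apply is_derive_Reals, derivable_pt_lim_const.
  - apply is_derive_epsilon. intros eps He.
    destruct (ppow_near_0 g Hg eps He) as [d [Hd Hy]].
    exists d; split; [exact Hd|]. intros y Hy'.
    rewrite (ppow_nonpos g 0), Rminus_0_r in * by lra.
    replace (y * ppow g y - 0 * 0 - (1 + g) * 0 * y) with (y * ppow g y) by ring.
    rewrite Rabs_mult, Rmult_comm. apply Rmult_le_compat_r; [apply Rabs_pos | left; auto].
  - apply is_derive_ext_loc with (fun y => Rpower y (1 + g)).
    + apply filter_imp with (fun y => 0 < y); [|now apply locally_gt].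
      intros y Hy. rewrite ppow_pos, Rpower_plus, Rpower_1 by lra. reflexivity.
    + rewrite ppow_pos by lra.
      replace g with (1 + g - 1) at 2 by ring.
      apply is_derive_Reals, derivable_pt_lim_power. exact Hp.
Qed.

Definition weight (g m : R) : R := ppow g (1 - m * m).

Definition mass (g : R) : R := RInt (weight g) (-1) 1.

Lemma weight_continuous (g m : R) : 0 < g -> continuous (weight g) m.
Proof.
  intros Hg. apply (continuous_comp (fun m => 1 - m * m) (ppow g)).
  - repeat continuity_step.
  - now apply ppow_continuous.
Qed.

Lemma is_derive_one_sub_sqr_mul_weight (g m : R) : 0 < g ->
  is_derive (fun y => (1 - y * y) * weight g y) m (- (2 + 2 * g) * m * weight g m).
Proof.
  intros Hg. eapply is_derive_eq.
  - apply (is_derive_comp (fun z => z * ppow g z) (fun y => 1 - y * y)).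
    + now apply is_derive_mul_ppow.
    + repeat derive_step.
  - unfold weight. simpl_derive_value. ring.
Qed.

Lemma weight_bounds (g m : R) : 0 < g -> -1 <= m <= 1 -> 0 <= weight g m <= 1.
Proof.
  intros Hg Hm. unfold weight. destruct (Rlt_dec 0 (1 - m * m)) as [Hp|Hn].
  - rewrite ppow_pos by exact Hp. split; [left; apply exp_pos|].
    replace 1 with (Rpower 1 g) at 2 by (unfold Rpower; now rewrite ln_1, Rmult_0_r, exp_0).
    apply Rle_Rpower_l; nra.
  - rewrite ppow_nonpos by lra. lra.
Qed.

Lemma mass_pos (g : R) : 0 < g -> 0 < mass g.
Proof.
  intros Hg. apply RInt_gt_0; [lra| |intros; now apply weight_continuous].
  intros m Hm. unfold weight. rewrite ppow_pos by nra. apply exp_pos.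
Qed.

Lemma kernel_bound (g : R) (k : nat) (m : R) : 0 < g -> -1 <= m <= 1 ->
  Rabs (m ^ k * weight g m) <= 1.
Proof.
  intros Hg Hm. destruct (weight_bounds g m Hg Hm) as [Hw0 Hw1].
  rewrite Rabs_mult, <- RPow_abs, (Rabs_pos_eq (weight g m)) by exact Hw0.
  assert (Hm' : Rabs m <= 1) by (apply Rabs_le; lra).
  assert (Rabs m ^ k <= 1) by (rewrite <- (pow1 k); apply pow_incr; split; auto; apply Rabs_pos).
  assert (0 <= Rabs m ^ k) by (apply pow_le, Rabs_pos).
  nra.
Qed.

Lemma uniform_continuity_Icc (h : R -> R) (a b : R) : (forall z, continuous h z) ->
  forall eps, 0 < eps -> exists d, 0 < d /\
    forall y z, a <= y <= b -> a <= z <= b -> Rabs (z - y) < d -> Rabs (h z - h y) < eps.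
Proof.
  intros Hh eps He.
  destruct (uniform_continuity_2d (fun u _ => h u) a b 0 0) with (mkposreal eps He) as [d Hd].
  { intros u v _ _. apply continuity_2d_pt_fst, Hh. }
  exists d. split; [apply cond_pos|]. intros y z Hy Hz Hyz.
  apply (Hd y 0 z 0); auto; try lra. rewrite Rminus_0_r, Rabs_R0. apply cond_pos.
Qed.

(* Characteristics of the system are the curves x -+ 2/3 t^3 = const, so the points that
   influence (x,t) are x + spread t * m with -1 <= m <= 1. *)
Definition spread (t : R) : R := 2 / 3 * t ^ 3.

Lemma is_derive_spread (t : R) : is_derive spread t (2 * t ^ 2).
Proof. unfold spread. eapply is_derive_eq; [repeat derive_step | simpl_derive_value; field]. Qed.

Definition avg (g : R) (k : nat) (h : R -> R) (x t : R) : R :=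
  RInt (fun m => h (x + spread t * m) * (m ^ k * weight g m)) (-1) 1.

Lemma RInt_Rminus (f g : R -> R) (a b : R) : ex_RInt f a b -> ex_RInt g a b ->
  RInt (fun m => f m - g m) a b = RInt f a b - RInt g a b.
Proof. exact (RInt_minus f g a b). Qed.

Lemma RInt_Rmult_l (f : R -> R) (a b c : R) : ex_RInt f a b ->
  RInt (fun m => c * f m) a b = c * RInt f a b.
Proof. exact (RInt_scal f a b c). Qed.

Section Averages.

Variable g : R.
Hypothesis g_pos : 0 < g.

Lemma kernel_continuous (k : nat) (m : R) : continuous (fun m => m ^ k * weight g m) m.
Proof.
  apply (continuous_mult (K := R_AbsRing) (fun m => m ^ k));
    [apply continuous_pow | now apply weight_continuous].
Qed.

Lemma integrand_continuous (k : nat) (h : R -> R) (x s m : R) : (forall z, continuous h z) ->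
  continuous (fun m => h (x + s * m) * (m ^ k * weight g m)) m.
Proof.
  intros Hh. apply (continuous_mult (K := R_AbsRing) (fun m => h (x + s * m))).
  - apply (continuous_comp (fun m => x + s * m) h); [repeat continuity_step | apply Hh].
  - apply kernel_continuous.
Qed.

Lemma ex_RInt_integrand (k : nat) (h : R -> R) (x s : R) : (forall z, continuous h z) ->
  ex_RInt (fun m => h (x + s * m) * (m ^ k * weight g m)) (-1) 1.
Proof.
  intros Hh. apply (ex_RInt_continuous (V := R_CompleteNormedModule)).
  intros m _. now apply integrand_continuous.
Qed.

Lemma avg_at_0 (h : R -> R) (x : R) : avg g 0 h x 0 = h x * mass g.
Proof.
  unfold avg, mass. rewrite <- RInt_Rmult_l.
  - apply RInt_ext. intros m _. unfold spread. simpl.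
    replace (x + 2 / 3 * (0 * (0 * (0 * 1))) * m) with x by ring. ring.
  - apply (ex_RInt_continuous (V := R_CompleteNormedModule)).
    intros m _. now apply weight_continuous.
Qed.

Lemma avg_continuous (k : nat) (h : R -> R) (x t : R) : (forall z, continuous h z) ->
  continuity_2d_pt (avg g k h) x t.
Proof.
  intros Hh eps.
  set (A := Rabs (spread t) + 2).
  assert (He4 : 0 < eps / 4) by (destruct eps; simpl; lra).
  destruct (uniform_continuity_Icc h (x - A) (x + A) Hh _ He4) as [d [Hd Hunif]].
  assert (Hd2 : 0 < Rmin 1 (d / 2)) by (apply Rmin_pos; lra).
  destruct (proj1 (continuous_epsilon spread t)
              (is_derive_continuous _ _ _ (is_derive_spread t)) _ Hd2) as [d' [Hd' Hsp]].
  assert (Hpos : 0 < Rmin (Rmin 1 (d / 2)) d') by (apply Rmin_pos; lra).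
  exists (mkposreal _ Hpos). intros y s Hy Hs. simpl in Hy, Hs.
  assert (Hy1 : Rabs (y - x) < 1) by
    (eapply Rlt_le_trans; [exact Hy|]; eapply Rle_trans; apply Rmin_l).
  assert (Hy2 : Rabs (y - x) < d / 2) by
    (eapply Rlt_le_trans; [exact Hy|]; eapply Rle_trans; [apply Rmin_l | apply Rmin_r]).
  assert (Hs' : Rabs (spread s - spread t) < Rmin 1 (d / 2))
    by (apply Hsp; eapply Rlt_le_trans; [exact Hs | apply Rmin_r]).
  assert (Hs1 := Rlt_le_trans _ _ _ Hs' (Rmin_l _ _)).
  assert (Hs2 := Rlt_le_trans _ _ _ Hs' (Rmin_r _ _)).
  assert (Hpt : forall m, -1 <= m <= 1 ->
            Rabs (h (y + spread s * m) * (m ^ k * weight g m)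
                  - h (x + spread t * m) * (m ^ k * weight g m)) <= eps / 4).
  { intros m Hm.
    rewrite <- Rmult_minus_distr_r, Rabs_mult.
    assert (HK := kernel_bound g k m g_pos Hm).
    assert (Hm1 : Rabs m <= 1) by (apply Rabs_le; lra).
    assert (Ht : Rabs (spread t * m) <= Rabs (spread t))
      by (rewrite Rabs_mult; generalize (Rabs_pos (spread t)); nra).
    assert (Hds : Rabs (spread s * m - spread t * m) < Rmin 1 (d / 2)).
    { rewrite <- Rmult_minus_distr_r, Rabs_mult.
      generalize (Rabs_pos (spread s - spread t)); nra. }
    apply Rabs_lt_between in Hds.
    assert (Hdh : Rabs (h (y + spread s * m) - h (x + spread t * m)) < eps / 4).
    { apply Rabs_le_between in Ht. apply Rabs_lt_between in Hy1, Hy2.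
      pose proof (Rmin_l 1 (d / 2)). pose proof (Rmin_r 1 (d / 2)).
      apply Hunif; unfold A; try split; try lra.
      apply Rabs_lt_between; lra. }
    generalize (Rabs_pos (m ^ k * weight g m))
               (Rabs_pos (h (y + spread s * m) - h (x + spread t * m))); nra. }
  unfold avg. rewrite <- RInt_Rminus by now apply ex_RInt_integrand.
  eapply Rle_lt_trans.
  - apply abs_RInt_le_const with (M := eps / 4); [lra | | exact Hpt].
    apply (ex_RInt_minus (V := R_CompleteNormedModule)); now apply ex_RInt_integrand.
  - destruct eps; simpl; lra.
Qed.

Variables (h h' : R -> R).
Hypothesis h_derive : forall z, is_derive h z (h' z).
Hypothesis h'_continuous : forall z, continuous h' z.

Let h_continuous (z : R) : continuous h z := is_derive_continuous _ _ _ (h_derive z).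

Lemma avg_dx (k : nat) (x t : R) : is_derive (fun y => avg g k h y t) x (avg g k h' x t).
Proof.
  apply (is_derive_RInt_param_continuous
           (fun y m => h (y + spread t * m) * (m ^ k * weight g m))
           (fun y m => h' (y + spread t * m) * (m ^ k * weight g m))).
  - intros y m. eapply is_derive_eq.
    + apply (is_derive_mult (K := R_AbsRing) (fun z => h (z + spread t * m)));
        [| apply is_derive_const | intros; apply Rmult_comm].
      apply (is_derive_comp h (fun z => z + spread t * m)); [apply h_derive | repeat derive_step].
    + simpl_derive_value. ring.
  - intros y m. apply (continuity_2d_pt_mult (fun y m => h' (y + spread t * m)));
      [|apply continuity_2d_pt_snd, kernel_continuous].
    apply (continuity_1d_2d_pt_comp h' (fun y m => y + spread t * m));
      [apply continuity_pt_filterlim, h'_continuous | repeat continuity_2d_step].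
  - intros y. now apply ex_RInt_integrand.
Qed.

Lemma avg_dt (k : nat) (x t : R) :
  is_derive (fun s => avg g k h x s) t (2 * t ^ 2 * avg g (S k) h' x t).
Proof.
  eapply is_derive_eq.
  - apply (is_derive_RInt_param_continuous
             (fun s m => h (x + spread s * m) * (m ^ k * weight g m))
             (fun s m => 2 * s ^ 2 * (h' (x + spread s * m) * (m ^ S k * weight g m)))).
    + intros s m. eapply is_derive_eq.
      * apply (is_derive_mult (K := R_AbsRing) (fun z => h (x + spread z * m)));
          [| apply is_derive_const | intros; apply Rmult_comm].
        apply (is_derive_comp h (fun z => x + spread z * m)); [apply h_derive|].
        apply (is_derive_plus (K := R_AbsRing) (fun _ => x)); [apply is_derive_const|].
        apply (is_derive_mult (K := R_AbsRing) spread (fun _ => m));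
          [apply is_derive_spread | apply is_derive_const | intros; apply Rmult_comm].
      * simpl_derive_value. ring.
    + intros s m. repeat continuity_2d_step.
      * apply (continuity_1d_2d_pt_comp h' (fun s m => x + spread s * m));
          [apply continuity_pt_filterlim, h'_continuous | repeat continuity_2d_step].
        apply continuity_2d_pt_fst, (is_derive_continuous _ _ _ (is_derive_spread _)).
      * apply continuity_2d_pt_snd, weight_continuous, g_pos.
    + intros s. now apply ex_RInt_integrand.
  - unfold avg. rewrite <- RInt_Rmult_l by now apply ex_RInt_integrand. reflexivity.
Qed.

(* Integration by parts against d/dm [(1 - m^2) weight g m] = -(2 + 2g) m weight g m;
   the boundary terms vanish at m = -1, 1. *)
Lemma avg_ibp (x t : R) :
  avg g 1 h x t = spread t / (2 + 2 * g) * (avg g 0 h' x t - avg g 2 h' x t).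
Proof.
  unfold avg. set (s := spread t).
  set (I0 := fun m => h' (x + s * m) * (m ^ 0 * weight g m)).
  set (I1 := fun m => h (x + s * m) * (m ^ 1 * weight g m)).
  set (I2 := fun m => h' (x + s * m) * (m ^ 2 * weight g m)).
  set (F := fun m => h (x + s * m) * ((1 - m * m) * weight g m)).
  assert (HF : forall m, is_derive F m (s * (I0 m - I2 m) - (2 + 2 * g) * I1 m)).
  { intros m. eapply is_derive_eq.
    - apply (is_derive_mult (K := R_AbsRing) (fun m => h (x + s * m)));
        [| apply is_derive_one_sub_sqr_mul_weight, g_pos | intros; apply Rmult_comm].
      apply (is_derive_comp h (fun m => x + s * m)); [apply h_derive | repeat derive_step].
    - unfold I0, I1, I2. simpl_derive_value. ring. }
  assert (HI : forall k h0, (forall z, continuous h0 z) ->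
                 forall m, continuous (fun m => h0 (x + s * m) * (m ^ k * weight g m)) m)
    by (intros; now apply integrand_continuous).
  assert (Hex : forall f : R -> R, (forall m, continuous f m) -> ex_RInt f (-1) 1).
  { intros f Hf. apply (ex_RInt_continuous (V := R_CompleteNormedModule)). intros; apply Hf. }
  assert (Hzero : RInt (fun m => s * (I0 m - I2 m) - (2 + 2 * g) * I1 m) (-1) 1 = 0).
  { apply (is_RInt_unique (V := R_CompleteNormedModule)).
    replace 0 with (F 1 - F (-1)) by (unfold F; ring).
    apply (is_RInt_derive (V := R_CompleteNormedModule)).
    - intros m _. apply HF.
    - intros m _. repeat continuity_step; apply HI; auto. }
  rewrite RInt_Rminus, !RInt_Rmult_l, RInt_Rminus in Hzero;
    try (apply Hex; intros; repeat continuity_step; apply HI; auto).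
  assert (Hsolve : forall A B C : R,
             s * (A - B) - (2 + 2 * g) * C = 0 -> C = s / (2 + 2 * g) * (A - B)).
  { intros A B C H. apply (Rmult_eq_reg_l (2 + 2 * g)); [|lra].
    field_simplify; lra. }
  exact (Hsolve _ _ _ Hzero).
Qed.

End Averages.

(* [taylor n c z] is the polynomial sum_(j <= n) c_j z^j / j!, written as iterated
   antiderivatives so that its derivative is given by the fundamental theorem of calculus. *)
Fixpoint taylor (n : nat) (c : nat -> R) (z : R) : R :=
  match n with
  | O => c O
  | S n' => c O + RInt (taylor n' (fun j => c (S j))) 0 z
  end.

Lemma taylor_ext (n : nat) (c c' : nat -> R) (z : R) :
  (forall j, c j = c' j) -> taylor n c z = taylor n c' z.
Proof.
  revert c c' z. induction n as [|n IH]; intros c c' z Hc; simpl; rewrite Hc; [reflexivity|].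
  f_equal. apply RInt_ext. intros w _. apply IH. intros j. apply Hc.
Qed.

Lemma taylor_at_0 (n : nat) (c : nat -> R) : taylor n c 0 = c O.
Proof.
  destruct n as [|n]; simpl; [reflexivity|].
  rewrite (RInt_point (V := R_CompleteNormedModule)). apply Rplus_0_r.
Qed.

Lemma taylor_continuous (n : nat) : forall (c : nat -> R) (z : R), continuous (taylor n c) z.
Proof.
  induction n as [|n IH]; intros c z; simpl.
  - apply continuous_const.
  - apply (continuous_plus (K := R_AbsRing) (fun _ => c O)); [apply continuous_const|].
    apply (is_derive_continuous _ _ (taylor n (fun j => c (S j)) z)).
    apply (is_derive_RInt (V := R_NormedModule) (taylor n (fun j => c (S j)))
             (fun z => RInt (taylor n (fun j => c (S j))) 0 z) 0).
    + apply filter_forall. intros w. apply (RInt_correct (V := R_CompleteNormedModule)).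
      apply (ex_RInt_continuous (V := R_CompleteNormedModule)). intros; apply IH.
    + apply IH.
Qed.

Lemma is_derive_taylor (n : nat) (c : nat -> R) (z : R) :
  is_derive (taylor (S n) c) z (taylor n (fun j => c (S j)) z).
Proof.
  simpl. eapply is_derive_eq.
  - apply (is_derive_plus (K := R_AbsRing) (fun _ => c O)); [apply is_derive_const|].
    apply (is_derive_RInt (V := R_NormedModule) (taylor n (fun j => c (S j)))
             (fun z => RInt (taylor n (fun j => c (S j))) 0 z) 0); [|apply taylor_continuous].
    apply filter_forall. intros w. apply (RInt_correct (V := R_CompleteNormedModule)).
    apply (ex_RInt_continuous (V := R_CompleteNormedModule)).
    intros; apply taylor_continuous.
  - simpl_derive_value. ring.
Qed.

Definition eventually_within (D : R -> Prop) (x : R) (P : R -> R -> Prop) : Prop :=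
  forall eps, 0 < eps -> exists d, 0 < d /\ forall y, D y -> Rabs (y - x) < d -> P eps y.

Lemma eventually_within_far (D : R -> Prop) (x r : R) (P : R -> R -> Prop) :
  0 < r -> (forall y, D y -> r <= Rabs (y - x)) -> eventually_within D x P.
Proof.
  intros Hr Hfar eps _. exists r. split; [exact Hr|].
  intros y Hy Hyx. specialize (Hfar y Hy). lra.
Qed.

Lemma eventually_within_union (D1 D2 : R -> Prop) (x : R) (P : R -> R -> Prop) :
  eventually_within D1 x P -> eventually_within D2 x P ->
  eventually_within (fun y => D1 y \/ D2 y) x P.
Proof.
  intros H1 H2 eps He.
  destruct (H1 eps He) as [d1 [Hd1 H1']], (H2 eps He) as [d2 [Hd2 H2']].
  exists (Rmin d1 d2). split; [now apply Rmin_pos|].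
  intros y [Hy|Hy] Hyx; [apply H1' | apply H2']; auto;
    eapply Rlt_le_trans; eauto; [apply Rmin_l | apply Rmin_r].
Qed.

Lemma eventually_of_pieces (a b x : R) (P : R -> R -> Prop) : a <= b ->
  (x <= a -> eventually_within (fun y => y <= a) x P) ->
  (a <= x <= b -> eventually_within (Icc a b) x P) ->
  (b <= x -> eventually_within (fun y => b <= y) x P) ->
  forall eps, 0 < eps -> exists d, 0 < d /\ forall y, Rabs (y - x) < d -> P eps y.
Proof.
  intros Hab HL HM HR.
  assert (HLM : eventually_within (fun y => y <= a \/ Icc a b y) x P).
  { apply eventually_within_union.
    - destruct (Rle_lt_dec x a) as [Hx|Hx]; [now apply HL|].
      apply (eventually_within_far _ _ (x - a)); [lra|].
      intros y Hy. rewrite Rabs_left; lra.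
    - destruct (Rlt_le_dec x a) as [Hx|Hx].
      { apply (eventually_within_far _ _ (a - x)); [lra|].
        intros y [Hy _]. rewrite Rabs_pos_eq; lra. }
      destruct (Rle_lt_dec x b) as [Hx'|Hx']; [now apply HM|].
      apply (eventually_within_far _ _ (x - b)); [lra|].
      intros y [_ Hy]. rewrite Rabs_left; lra. }
  assert (HLMR := eventually_within_union _ (fun y => b <= y) x P HLM).
  intros eps He. destruct HLMR with eps as [d [Hd Hy]]; [|exact He|].
  - destruct (Rle_lt_dec b x) as [Hx|Hx]; [now apply HR|].
    apply (eventually_within_far _ _ (b - x)); [lra|].
    intros y Hy. rewrite Rabs_pos_eq; lra.
  - exists d. split; [exact Hd|]. intros y Hyx. apply Hy; [|exact Hyx].
    unfold Icc. destruct (Rle_lt_dec y a); [left; left; lra|].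
    destruct (Rle_lt_dec y b); [left; right; lra | right; lra].
Qed.

Definition extend (d : nat -> R -> R) (a b : R) (n i : nat) (x : R) : R :=
  if Rlt_dec x a then taylor (n - i) (fun j => d (i + j)%nat a) (x - a)
  else if Rlt_dec b x then taylor (n - i) (fun j => d (i + j)%nat b) (x - b)
  else d i x.

Definition Ck_global (n : nat) (d : nat -> R -> R) : Prop :=
  (forall i x, (i < n)%nat -> is_derive (d i) x (d (S i) x)) /\
  (forall i x, (i <= n)%nat -> continuous (d i) x).

Section Extension.

Variables (a b : R) (n : nat) (f : R -> R) (d : nat -> R -> R).
Hypothesis a_le_b : a <= b.
Hypothesis d_Ck : Ck_on a b n f d.

Lemma extend_in (i : nat) (x : R) : a <= x <= b -> extend d a b n i x = d i x.
Proof.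
  intros Hx. unfold extend.
  destruct (Rlt_dec x a); [lra|]. destruct (Rlt_dec b x); [lra | reflexivity].
Qed.

Lemma extend_left (i : nat) (x : R) : x <= a ->
  extend d a b n i x = taylor (n - i) (fun j => d (i + j)%nat a) (x - a).
Proof.
  intros Hx. unfold extend. destruct (Rlt_dec x a); [reflexivity|].
  assert (x = a) as -> by lra. destruct (Rlt_dec b a); [lra|].
  now rewrite Rminus_diag, taylor_at_0, Nat.add_0_r.
Qed.

Lemma extend_right (i : nat) (x : R) : b <= x ->
  extend d a b n i x = taylor (n - i) (fun j => d (i + j)%nat b) (x - b).
Proof.
  intros Hx. unfold extend. destruct (Rlt_dec x a); [lra|].
  destruct (Rlt_dec b x); [reflexivity|].
  assert (x = b) as -> by lra. now rewrite Rminus_diag, taylor_at_0, Nat.add_0_r.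
Qed.

Lemma is_derive_taylor_at (i : nat) (p x : R) : (i < n)%nat ->
  is_derive (fun y => taylor (n - i) (fun j => d (i + j)%nat p) (y - p)) x
            (taylor (n - S i) (fun j => d (S i + j)%nat p) (x - p)).
Proof.
  intros Hi. replace (n - i)%nat with (S (n - S i)) by lia.
  eapply is_derive_eq.
  - apply (is_derive_comp (taylor (S (n - S i)) _) (fun y => y - p));
      [apply is_derive_taylor | repeat derive_step].
  - simpl_derive_value. rewrite Ropp_0, Rplus_0_r, Rmult_1_l.
    apply taylor_ext. intros j. f_equal. lia.
Qed.

Lemma is_derive_extend (i : nat) (x : R) : (i < n)%nat ->
  is_derive (extend d a b n i) x (extend d a b n (S i) x).
Proof.
  intros Hi. apply is_derive_epsilon, (eventually_of_pieces a b x); [exact a_le_b | ..].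
  - intros Hx eps He.
    destruct (proj1 (is_derive_epsilon _ _ _) (is_derive_taylor_at i a x Hi) eps He)
      as [r [Hr Hy]].
    exists r. split; [exact Hr|]. intros y Hya Hyx. rewrite !extend_left by auto. now apply Hy.
  - intros Hx eps He.
    destruct (proj1 (proj2 d_Ck) i x Hi Hx eps He) as [r [Hr Hy]].
    exists r. split; [exact Hr|]. intros y Hya Hyx. rewrite !extend_in by auto. now apply Hy.
  - intros Hx eps He.
    destruct (proj1 (is_derive_epsilon _ _ _) (is_derive_taylor_at i b x Hi) eps He)
      as [r [Hr Hy]].
    exists r. split; [exact Hr|]. intros y Hya Hyx. rewrite !extend_right by auto. now apply Hy.
Qed.

Lemma extend_top_continuous (x : R) : continuous (extend d a b n n) x.
Proof.
  apply continuous_epsilon, (eventually_of_pieces a b x); [exact a_le_b | ..].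
  - intros Hx eps He. exists 1. split; [lra|]. intros y Hya _.
    rewrite !extend_left, Nat.sub_diag, Rminus_diag, Rabs_R0 by auto. exact He.
  - intros Hx eps He.
    destruct (proj2 (proj2 d_Ck) n x (le_n n) Hx eps He) as [r [Hr Hy]].
    exists r. split; [exact Hr|]. intros y Hya Hyx. rewrite !extend_in by auto. now apply Hy.
  - intros Hx eps He. exists 1. split; [lra|]. intros y Hya _.
    rewrite !extend_right, Nat.sub_diag, Rminus_diag, Rabs_R0 by auto. exact He.
Qed.

Lemma Ck_global_extend : Ck_global n (extend d a b n).
Proof.
  split; [intros; now apply is_derive_extend|].
  intros i x Hi. destruct (Nat.lt_ge_cases i n) as [Hlt|Hge].
  - exact (is_derive_continuous _ _ _ (is_derive_extend i x Hlt)).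
  - replace i with n by lia. apply extend_top_continuous.
Qed.

End Extension.

Lemma Ck_global_scal (n : nat) (c : R) (d : nat -> R -> R) :
  Ck_global n d -> Ck_global n (fun j z => c * d j z).
Proof.
  intros [Hd Hc]. split.
  - intros i x Hi. now apply is_derive_scal, Hd.
  - intros i x Hi. apply (continuous_mult (K := R_AbsRing) (fun _ => c));
      [apply continuous_const | now apply Hc].
Qed.

Section Towers.

Variables (n : nat) (d : nat -> R -> R) (g : R).
Hypothesis d_Ck : Ck_global n d.
Hypothesis g_pos : 0 < g.

Lemma avg_tower_dx (k j : nat) (x t : R) : (j < n)%nat ->
  is_derive (fun y => avg g k (d j) y t) x (avg g k (d (S j)) x t).
Proof.
  intros Hj. apply avg_dx; [exact g_pos | intros; now apply d_Ck | intros; apply d_Ck; lia].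
Qed.

Lemma avg_tower_dt (k j : nat) (x t : R) : (j < n)%nat ->
  is_derive (fun s => avg g k (d j) x s) t (2 * t ^ 2 * avg g (S k) (d (S j)) x t).
Proof.
  intros Hj. apply avg_dt; [exact g_pos | intros; now apply d_Ck | intros; apply d_Ck; lia].
Qed.

Lemma avg_tower_continuous (k j : nat) (x t : R) : (j <= n)%nat ->
  continuity_2d_pt (avg g k (d j)) x t.
Proof. intros Hj. apply avg_continuous; [exact g_pos | intros; now apply d_Ck]. Qed.

Lemma avg_tower_ibp (j : nat) (x t : R) : (j < n)%nat ->
  avg g 1 (d j) x t
  = spread t / (2 + 2 * g) * (avg g 0 (d (S j)) x t - avg g 2 (d (S j)) x t).
Proof.
  intros Hj. apply avg_ibp; [exact g_pos | intros; now apply d_Ck | intros; apply d_Ck; lia].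
Qed.

End Towers.

Section Solution.

Variables v0 v1 : nat -> R -> R.
Hypothesis v0_C4 : Ck_global 4 v0.
Hypothesis v1_C3 : Ck_global 3 v1.

(* Normalised so that at t = 0 the potential below equals mass (1/6) * coef0 0 = -u0/2 and
   u_t / t equals 2 * mass (5/6) * coef1 0 = u1. *)
Definition coef0 (j : nat) (z : R) : R := - / (2 * mass (1/6)) * v0 j z.
Definition coef1 (j : nat) (z : R) : R := / (2 * mass (5/6)) * v1 j z.

Lemma coef0_C4 : Ck_global 4 coef0.
Proof. exact (Ck_global_scal 4 _ v0 v0_C4). Qed.

Lemma coef1_C3 : Ck_global 3 coef1.
Proof. exact (Ck_global_scal 3 _ v1 v1_C3). Qed.

(* [pot j] is the j-th x-derivative of the potential u, [pot_t j] its t-derivative, and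
   [vel j] the j-th x-derivative of u_t / t, in a form that is regular at t = 0. *)
Definition pot (j : nat) (x t : R) : R :=
  avg (1/6) 0 (coef0 j) x t + 1/2 * t ^ 3 * avg (1/6) 1 (coef0 (S j)) x t
  + t ^ 2 * avg (5/6) 0 (coef1 j) x t + 1/4 * t ^ 5 * avg (5/6) 1 (coef1 (S j)) x t.

Definition pot_t (j : nat) (x t : R) : R :=
  7/2 * t ^ 2 * avg (1/6) 1 (coef0 (S j)) x t + t ^ 5 * avg (1/6) 2 (coef0 (S (S j))) x t
  + 2 * t * avg (5/6) 0 (coef1 j) x t + 13/4 * t ^ 4 * avg (5/6) 1 (coef1 (S j)) x t
  + 1/2 * t ^ 7 * avg (5/6) 2 (coef1 (S (S j))) x t.

Definition vel (j : nat) (x t : R) : R :=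
  t ^ 4 * avg (1/6) 0 (coef0 (S (S j))) x t + 2 * avg (5/6) 0 (coef1 j) x t
  + 1/2 * t ^ 3 * avg (5/6) 1 (coef1 (S j)) x t
  + 1/2 * t ^ 6 * avg (5/6) 0 (coef1 (S (S j))) x t.

Definition vel_t (x t : R) : R :=
  4 * t ^ 3 * avg (1/6) 0 (coef0 2) x t + 2 * t ^ 6 * avg (1/6) 1 (coef0 3) x t
  + 11/2 * t ^ 2 * avg (5/6) 1 (coef1 1) x t + t ^ 5 * avg (5/6) 2 (coef1 2) x t
  + 3 * t ^ 5 * avg (5/6) 0 (coef1 2) x t + t ^ 8 * avg (5/6) 1 (coef1 3) x t.

Ltac derive_avg :=
  match goal with
  | |- is_derive (fun y => avg ?g _ (coef0 _) y _) _ _ =>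
      apply (avg_tower_dx 4 coef0 g coef0_C4); [lra | lia]
  | |- is_derive (fun y => avg ?g _ (coef1 _) y _) _ _ =>
      apply (avg_tower_dx 3 coef1 g coef1_C3); [lra | lia]
  | |- is_derive (fun s => avg ?g _ (coef0 _) _ s) _ _ =>
      apply (avg_tower_dt 4 coef0 g coef0_C4); [lra | lia]
  | |- is_derive (fun s => avg ?g _ (coef1 _) _ s) _ _ =>
      apply (avg_tower_dt 3 coef1 g coef1_C3); [lra | lia]
  end.

Ltac continuity_avg :=
  match goal with
  | |- continuity_2d_pt (fun x t => avg ?g _ (coef0 _) x t) _ _ =>
      apply (avg_tower_continuous 4 coef0 g coef0_C4); [lra | lia]
  | |- continuity_2d_pt (fun x t => avg ?g _ (coef1 _) x t) _ _ =>
      apply (avg_tower_continuous 3 coef1 g coef1_C3); [lra | lia]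
  end.

Lemma pot_dx (j : nat) (x t : R) : (j <= 1)%nat ->
  is_derive (fun y => pot j y t) x (pot (S j) x t).
Proof.
  intros Hj. unfold pot. eapply is_derive_eq.
  - repeat (derive_step || derive_avg).
  - simpl_derive_value. field.
Qed.

Lemma pot_dt (j : nat) (x t : R) : (j <= 1)%nat ->
  is_derive (fun s => pot j x s) t (pot_t j x t).
Proof.
  intros Hj. unfold pot, pot_t. eapply is_derive_eq.
  - repeat (derive_step || derive_avg).
  - simpl_derive_value. field.
Qed.

Lemma vel_dx (x t : R) : is_derive (fun y => vel 0 y t) x (vel 1 x t).
Proof.
  unfold vel. eapply is_derive_eq.
  - repeat (derive_step || derive_avg).
  - simpl_derive_value. field.
Qed.

Lemma vel_dt (x t : R) : is_derive (fun s => vel 0 x s) t (vel_t x t).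
Proof.
  unfold vel, vel_t. eapply is_derive_eq.
  - repeat (derive_step || derive_avg).
  - simpl_derive_value. field.
Qed.

Lemma pot_continuous (j : nat) (x t : R) : (j <= 2)%nat -> continuity_2d_pt (pot j) x t.
Proof. intros Hj. unfold pot. repeat (continuity_2d_step || continuity_avg). Qed.

Lemma pot_t_continuous (j : nat) (x t : R) : (j <= 1)%nat -> continuity_2d_pt (pot_t j) x t.
Proof. intros Hj. unfold pot_t. repeat (continuity_2d_step || continuity_avg). Qed.

Lemma vel_continuous (j : nat) (x t : R) : (j <= 1)%nat -> continuity_2d_pt (vel j) x t.
Proof. intros Hj. unfold vel. repeat (continuity_2d_step || continuity_avg). Qed.

Lemma vel_t_continuous (x t : R) : continuity_2d_pt vel_t x t.
Proof. unfold vel_t. repeat (continuity_2d_step || continuity_avg). Qed.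

Lemma pot_t_eq (j : nat) (x t : R) : (j <= 1)%nat -> pot_t j x t = t * vel j x t.
Proof.
  intros Hj. unfold pot_t, vel.
  rewrite (avg_tower_ibp 4 coef0 (1/6) coef0_C4), (avg_tower_ibp 3 coef1 (5/6) coef1_C3)
    by (lra || lia).
  unfold spread. field.
Qed.

Lemma vel_t_eq (x t : R) : vel_t x t = 4 * t ^ 3 * pot 2 x t.
Proof.
  unfold vel_t, pot.
  rewrite (avg_tower_ibp 3 coef1 (5/6) coef1_C3 ltac:(lra) 1) by lia.
  unfold spread. field.
Qed.

Definition Rsol (x t : R) : R := vel 0 x t - 2 * t * pot 1 x t - v1 0 x - t * v0 1 x.
Definition Rsol_x (x t : R) : R := vel 1 x t - 2 * t * pot 2 x t - v1 1 x - t * v0 2 x.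
Definition Rsol_t (x t : R) : R := vel_t x t - 2 * pot 1 x t - 2 * t * pot_t 1 x t - v0 1 x.
Definition Ssol (x t : R) : R := vel 0 x t + 2 * t * pot 1 x t - v1 0 x + t * v0 1 x.
Definition Ssol_x (x t : R) : R := vel 1 x t + 2 * t * pot 2 x t - v1 1 x + t * v0 2 x.
Definition Ssol_t (x t : R) : R := vel_t x t + 2 * pot 1 x t + 2 * t * pot_t 1 x t + v0 1 x.
Definition Wsol (x t : R) : R := - 2 * pot 0 x t - v0 0 x.
Definition Wsol_x (x t : R) : R := - 2 * pot 1 x t - v0 1 x.
Definition Wsol_t (x t : R) : R := - 2 * pot_t 0 x t.

Ltac derive_piece :=
  match goal with
  | |- is_derive (fun y => pot _ y _) _ _ => apply pot_dx; lia
  | |- is_derive (fun s => pot _ _ s) _ _ => apply pot_dt; lia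
  | |- is_derive (fun y => vel 0 y _) _ _ => apply vel_dx
  | |- is_derive (fun s => vel 0 _ s) _ _ => apply vel_dt
  | |- is_derive (fun y => v0 _ y) _ _ => apply (proj1 v0_C4); lia
  | |- is_derive (fun y => v1 _ y) _ _ => apply (proj1 v1_C3); lia
  end.

Ltac continuity_piece :=
  match goal with
  | |- continuity_2d_pt (fun x t => pot _ x t) _ _ => apply pot_continuous; lia
  | |- continuity_2d_pt (fun x t => pot_t _ x t) _ _ => apply pot_t_continuous; lia
  | |- continuity_2d_pt (fun x t => vel _ x t) _ _ => apply vel_continuous; lia
  | |- continuity_2d_pt (fun x t => vel_t x t) _ _ => apply vel_t_continuous
  | |- continuity_2d_pt (fun x _ => v0 _ x) _ _ =>
      apply continuity_2d_pt_fst, (proj2 v0_C4); lia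
  | |- continuity_2d_pt (fun x _ => v1 _ x) _ _ =>
      apply continuity_2d_pt_fst, (proj2 v1_C3); lia
  end.

Ltac solve_C1 :=
  apply C1_on2_of_partials; intros u v;
  [ eapply is_derive_eq; [repeat (derive_step || derive_piece) | simpl_derive_value; field]
  | eapply is_derive_eq; [repeat (derive_step || derive_piece) | simpl_derive_value; field]
  | repeat (continuity_2d_step || continuity_piece)
  | repeat (continuity_2d_step || continuity_piece) ].

Lemma sol_C1 (D : R -> R -> Prop) :
  C1_on2 D Rsol Rsol_x Rsol_t /\ C1_on2 D Ssol Ssol_x Ssol_t /\ C1_on2 D Wsol Wsol_x Wsol_t.
Proof.
  unfold Rsol, Rsol_x, Rsol_t, Ssol, Ssol_x, Ssol_t, Wsol, Wsol_x, Wsol_t.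
  split; [|split]; solve_C1.
Qed.

Lemma sol_pde (x t : R) : 0 < t ->
  Rsol_t x t + 2 * t ^ 2 * Rsol_x x t
    = (Rsol x t - Ssol x t) / (2 * t) - 2 * t ^ 2 * (v1 1 x + v0 2 x * t) /\
  Ssol_t x t - 2 * t ^ 2 * Ssol_x x t
    = (Ssol x t - Rsol x t) / (2 * t) + 2 * t ^ 2 * (v1 1 x - v0 2 x * t) /\
  Wsol_t x t - 2 * t ^ 2 * Wsol_x x t = - 2 * t * (Rsol x t + v1 0 x).
Proof.
  intros Ht.
  unfold Rsol, Rsol_x, Rsol_t, Ssol, Ssol_x, Ssol_t, Wsol, Wsol_x, Wsol_t.
  rewrite vel_t_eq, !pot_t_eq by lia.
  repeat split; field; lra.
Qed.

Lemma sol_at_0 (x : R) :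
  Rsol x 0 = 0 /\ Ssol x 0 = 0 /\ Wsol x 0 = 0 /\
  Rsol_t x 0 = 0 /\ Ssol_t x 0 = 0 /\ Wsol_t x 0 = 0.
Proof.
  unfold Rsol, Ssol, Wsol, Rsol_t, Ssol_t, Wsol_t, vel, vel_t, pot, pot_t, coef0, coef1.
  rewrite !avg_at_0 by lra.
  assert (mass (1/6) > 0) by (apply mass_pos; lra).
  assert (mass (5/6) > 0) by (apply mass_pos; lra).
  repeat split; field; lra.
Qed.

End Solution.

Theorem theoremA2 (x1 x2 : R) (u0 u1 : R -> R) (d0 d1 : nat -> R -> R) :
  x1 < x2 ->
  Ck_on x1 x2 4 u0 d0 ->
  Ck_on x1 x2 3 u1 d1 ->
  exists deltat : R,
    0 < deltat /\ deltat ^ 3 <= 3 * (x2 - x1) / 4 /\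
    exists (Rf Rx Rt Sf Sx St Wf Wx Wt : R -> R -> R),
      C1_on2 (Dtilde x1 x2 deltat) Rf Rx Rt /\
      C1_on2 (Dtilde x1 x2 deltat) Sf Sx St /\
      C1_on2 (Dtilde x1 x2 deltat) Wf Wx Wt /\
      (forall x t, Dtilde x1 x2 deltat x t -> 0 < t ->
         Rt x t + 2 * t ^ 2 * Rx x t
           = (Rf x t - Sf x t) / (2 * t) - 2 * t ^ 2 * (d1 1%nat x + d0 2%nat x * t) /\
         St x t - 2 * t ^ 2 * Sx x t
           = (Sf x t - Rf x t) / (2 * t) + 2 * t ^ 2 * (d1 1%nat x - d0 2%nat x * t) /\
         Wt x t - 2 * t ^ 2 * Wx x t = - 2 * t * (Rf x t + u1 x)) /\
      (forall x, x1 <= x <= x2 ->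
         Rf x 0 = 0 /\ Sf x 0 = 0 /\ Wf x 0 = 0 /\
         Rt x 0 = 0 /\ St x 0 = 0 /\ Wt x 0 = 0).
Proof.
  intros Hx12 Hu0 Hu1.
  set (v0 := extend d0 x1 x2 4). set (v1 := extend d1 x1 x2 3).
  assert (Hv0 : Ck_global 4 v0) by (apply (Ck_global_extend _ _ _ u0); auto; lra).
  assert (Hv1 : Ck_global 3 v1) by (apply (Ck_global_extend _ _ _ u1); auto; lra).
  set (delta := Rmin 1 (3 * (x2 - x1) / 4)).
  assert (Hdelta : 0 < delta) by (apply Rmin_pos; lra).
  exists delta. split; [exact Hdelta|]. split.
  { assert (delta <= 1) by apply Rmin_l. assert (delta <= 3 * (x2 - x1) / 4) by apply Rmin_r.
    simpl. nra. }
  exists (Rsol v0 v1), (Rsol_x v0 v1), (Rsol_t v0 v1), (Ssol v0 v1), (Ssol_x v0 v1),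
    (Ssol_t v0 v1), (Wsol v0 v1), (Wsol_x v0 v1), (Wsol_t v0 v1).
  destruct (sol_C1 v0 v1 Hv0 Hv1 (Dtilde x1 x2 delta)) as [HR [HS HW]].
  split; [exact HR|]. split; [exact HS|]. split; [exact HW|]. split.
  - intros x t [Ht Hx] Htpos.
    assert (Hx' : x1 <= x <= x2) by (assert (0 <= t ^ 3) by (apply pow_le; lra); lra).
    rewrite <- (extend_in x1 x2 4 d0 2 x), <- (extend_in x1 x2 3 d1 1 x),
      <- (proj1 Hu1 x Hx'), <- (extend_in x1 x2 3 d1 0 x) by exact Hx'.
    now apply sol_pde.
  - intros x _. now apply sol_at_0.
Qed.
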